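(* Let $T_1=\{12|3456,\,123|456,\,1234|56\}$, $T_2=\{13|2456,\,123|456,\,1235|46\}$, $T_3=\{13|2456,\,123|456,\,1234|56\}$, $T_4=\{12|3456,\,123|456,\,1235|46\}$ be binary trees on leaves $\{1,\dots,6\}$, and let $f=q_{GGGGGG}+q_{GTTTTG}-q_{GTGGTG}-q_{GGTTGG}$. Then for the JC model and for the K2P model, $f\in\mathcal{I}(V_{T_1}\ast V_{T_2})\setminus\mathcal{I}(V_{T_i})$ for $i\in\{3,4\}$. In particular $V_{T_i}\not\subseteq V_{T_1}\ast V_{T_2}$ for $i\in\{3,4\}$.
   Context: Trees are unrooted binary trees described by their nontrivial splits; $\Sigma(T)$ is the set of all splits of $T$ including trivial ones $\{i\}|[6]\setminus\{i\}$. With $G=\mathbb{Z}_2\times\mathbb{Z}_2$ and $A=(0,0)$, $C=(0,1)$, $G=(1,0)$, $T=(1,1)$, the K3P model on $T$ in Fourier coordinates $q_{g_1\cdots g_6}$ is $q_{g_1\cdots g_6}=\prod_{A|B\in\Sigma(T)}a^{A|B}_{\sum_{i\in A}g_i}$ if $\sum g_i=0$ and $0$ otherwise; K2P imposes $a^e_G=a^e_T$, JC imposes $a^e_C=a^e_G=a^e_T$ for all splits $e$. $V_T$ is the Zariski closure in $\mathbb{P}^{4^6-1}$ of the image for complex parameters; $V\ast W$ is the join (closure of the union of lines meeting $V$ and $W$); $\mathcal{I}(V)$ is the ideal of polynomials vanishing on $V$. *)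

From HB Require Import structures.
From mathcomp Require Import all_boot all_order all_algebra.
From mathcomp Require Import reals complex.
From mathcomp Require Import mpoly.
Set Implicit Arguments. Unset Strict Implicit. Unset Printing Implicit Defensive.
Import GRing.Theory Num.Theory.
Local Open Scope ring_scope.

Notation grp := ('Z_2 * 'Z_2)%type.
Definition nA : grp := (0, 0).
Definition nC : grp := (0, 1).
Definition nG : grp := (1, 0).
Definition nT : grp := (1, 1).

(* Leaves 1..6 are 'I_6 (leaf k is the ordinal k-1). *)
Definition leaf := 'I_6.
(* Words g_1 ... g_6 indexing the Fourier coordinates. *)
Definition word := {ffun leaf -> grp}.
Definition N := #|{: word}|.
Definition coord (w : word) : 'I_N := enum_rank w.

Notation CC R := (complex R).

(* Points of the affine cone C^(4^6) over P^(4^6-1), and polynomials. *)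
Notation point R := ('I_N -> CC R).
Notation poly R := (mpoly.mpoly N (CC R)).
Definition ev (R : realType) (p : poly R) (x : point R) : CC R := mpoly.meval x p.

(* A split A|B is represented by one side A (a subset of leaves). *)
Definition split := {set leaf}.
Definition Sigma (T : seq split) : seq split :=
  [seq [set i] | i <- enum leaf] ++ T.

Inductive model := JC | K2P | K3P.

Definition params (R : realType) := split -> grp -> CC R.

Definition model_constraint (R : realType) (m : model) (a : params R) : Prop :=
  match m with
  | K3P => True
  | K2P => forall e, a e nG = a e nT
  | JC => forall e, a e nC = a e nG /\ a e nG = a e nT
  end.

Definition qmap (R : realType) (T : seq split) (a : params R) : point R :=
  fun k => let w := enum_val k in
    if \sum_(i : leaf) w i == 0
    then \prod_(e <- Sigma T) a e (\sum_(i in e) w i)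
    else 0.

Definition ideal_of (R : realType) (V : point R -> Prop) : poly R -> Prop :=
  fun p => forall x, V x -> ev p x = 0.

Definition zclosure (R : realType) (S : point R -> Prop) : point R -> Prop :=
  fun x => forall p, ideal_of S p -> ev p x = 0.

Definition VT (R : realType) (m : model) (T : seq split) : point R -> Prop :=
  zclosure (fun x => exists a : params R, model_constraint m a /\ x = qmap T a).

Definition join (R : realType) (V W : point R -> Prop) : point R -> Prop :=
  zclosure (fun x => exists y z (l u : CC R), V y /\ W z /\ x = fun k => l * y k + u * z k).

Definition subset_pts (R : realType) (V W : point R -> Prop) : Prop :=
  forall x, V x -> W x.

(* The trees, via their nontrivial splits (leaf k written as ordinal k-1). *)
Definition L (k : nat) : leaf := inord k.
Definition T1 : seq split := [:: [set L 0; L 1]; [set L 0; L 1; L 2]; [set L 0; L 1; L 2; L 3]].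
Definition T2 : seq split := [:: [set L 0; L 2]; [set L 0; L 1; L 2]; [set L 0; L 1; L 2; L 4]].
Definition T3 : seq split := [:: [set L 0; L 2]; [set L 0; L 1; L 2]; [set L 0; L 1; L 2; L 3]].
Definition T4 : seq split := [:: [set L 0; L 1]; [set L 0; L 1; L 2]; [set L 0; L 1; L 2; L 4]].

Definition mkw (g1 g2 g3 g4 g5 g6 : grp) : word :=
  [ffun i : leaf => nth nA [:: g1; g2; g3; g4; g5; g6] i].
Definition q (R : realType) (w : word) : poly R := mpoly.mpolyX (CC R) (mpoly.mnm1 (coord w)).

Definition f (R : realType) : poly R :=
  q R (mkw nG nG nG nG nG nG) + q R (mkw nG nT nT nT nT nG)
  - q R (mkw nG nT nG nG nT nG) - q R (mkw nG nG nT nT nG nG).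

(* In the K2P model (and a fortiori in JC) the parameters cannot tell the letters G and T
   apart, so a Fourier coordinate q_w only depends on the labels of the splits of the tree
   read modulo G = T.  On T1 the four words of f pair up as GGGGGG ~ GGTTGG and
   GTTTTG ~ GTGGTG, on T2 as GGGGGG ~ GTGGTG and GTTTTG ~ GGTTGG, so the linear form f
   vanishes on both parametrizations, hence on their closures and on the join.  On T3
   and T4 the pairings break: with a^e_A = 2 and a^e_g = 1 otherwise, q_w = 2^(number of
   splits labelled A), which gives f = 4 + 1 - 2 - 2 = 1. *)
From HB Require Import structures.
From Pilot Require Import Defs.
From mathcomp Require Import all_boot all_algebra reals complex mpoly.
From mathcomp Require Import ring.
Set Implicit Arguments. Unset Strict Implicit. Unset Printing Implicit Defensive.
Import GRing.Theory.
Local Open Scope ring_scope.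

Lemma ideal_of_zclosure (R : realType) (S : point R -> Prop) (p : {mpoly CC R[Defs.N]}) :
  ideal_of S p -> ideal_of (zclosure S) p.
Proof. by move=> Sp x; apply. Qed.

Lemma zclosure_sub (R : realType) (S : point R -> Prop) (x : point R) :
  S x -> zclosure S x.
Proof. by move=> Sx p; apply. Qed.

Lemma ideal_of_join (R : realType) (V W : point R -> Prop) (p : {mpoly CC R[Defs.N]}) :
  (forall y z l u, ev p (fun k => l * y k + u * z k) = l * ev p y + u * ev p z) ->
  ideal_of V p -> ideal_of W p -> ideal_of (join V W) p.
Proof.
move=> p_lin Vp Wp; apply: ideal_of_zclosure => _ [y [z [l [u [Vy [Wz ->]]]]]].
by rewrite p_lin Vp // Wp // !mulr0 addr0.
Qed.

Lemma nonvanishing_not_ideal (R : realType) (V : point R -> Prop) (p : {mpoly CC R[Defs.N]}) x :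
  V x -> ev p x != 0 -> ~ ideal_of V p.
Proof. by move=> Vx /eqP px_neq0 Vp; apply: px_neq0; apply: Vp. Qed.

Lemma nonvanishing_not_subset (R : realType) (V W : point R -> Prop) (p : {mpoly CC R[Defs.N]}) x :
  ideal_of W p -> V x -> ev p x != 0 -> ~ subset_pts V W.
Proof. by move=> Wp Vx px_neq0 VW; apply: nonvanishing_not_ideal Vx px_neq0 _ => y /VW/Wp. Qed.

Lemma model_constraint_K2P (R : realType) (m : model) (a : params R) :
  m = JC \/ m = K2P -> model_constraint m a -> forall e, a e nG = a e nT.
Proof. by case=> -> /= Ha e; [case: (Ha e) | exact: Ha]. Qed.

(* Collapses T onto G: the letters the K2P model cannot tell apart. *)
Definition k2p (g : grp) : grp := if g == nT then nG else g.

Lemma k2p_param (R : realType) (a : params R) :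
  (forall e, a e nG = a e nT) -> forall e g, a e (k2p g) = a e g.
Proof. by move=> aGT e g; rewrite /k2p; case: eqP => [->|]. Qed.

Definition label (w : word) (e : {set leaf}) : grp := \sum_(i in e) w i.

Definition k2p_equiv (T : seq {set leaf}) (w w' : word) : Prop :=
  forall e, e \in Sigma T -> k2p (label w e) = k2p (label w' e).

Lemma qmap_k2p_equiv (R : realType) (T : seq {set leaf}) (a : params R) (w w' : word) :
  (forall e, a e nG = a e nT) -> \sum_i w i = \sum_i w' i -> k2p_equiv T w w' ->
  qmap T a (Defs.coord w) = qmap T a (Defs.coord w').
Proof.
move=> aGT sum_ww' ww'; rewrite /qmap /Defs.coord !enum_rankK sum_ww'; case: ifP => // _.
apply: eq_big_seq => e /ww'; rewrite /label => eq_k2p.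
by rewrite -[LHS](k2p_param aGT) -[RHS](k2p_param aGT) eq_k2p.
Qed.

Lemma k2p_equiv_internal (T : seq {set leaf}) (w w' : word) :
  (forall i, k2p (w i) = k2p (w' i)) ->
  {in T, forall e, k2p (label w e) = k2p (label w' e)} -> k2p_equiv T w w'.
Proof.
move=> ww'_leaves ww'_T e; rewrite mem_cat => /orP[/mapP[i _ ->]|/ww'_T //].
by rewrite /label !big_set1.
Qed.

Definition weight_A (R : realType) : params R := fun _ g => if g == nA then 2 else 1.

Lemma weight_A_constraint (R : realType) (m : model) :
  m = JC \/ m = K2P -> model_constraint m (weight_A R).
Proof. by case=> ->. Qed.

Lemma qmap_weight_A (R : realType) (T : seq {set leaf}) (w : word) :
  \sum_i w i == 0 ->
  qmap T (weight_A R) (Defs.coord w) = 2 ^+ count (fun e => label w e == nA) (Sigma T).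
Proof.
rewrite /qmap /Defs.coord enum_rankK => ->.
elim: (Sigma T) => [|e s IHs]; first by rewrite big_nil.
by rewrite big_cons IHs /= /weight_A /label; case: eqP; rewrite ?exprS ?mul1r.
Qed.

Lemma count_A_internal (T : seq {set leaf}) (w : word) :
  (forall i, w i != nA) ->
  count (fun e => label w e == nA) (Sigma T) = count (fun e => label w e == nA) T.
Proof.
move=> w_neqA; rewrite count_cat count_map (eq_count (a2 := pred0)) ?count_pred0 //.
by move=> i /=; rewrite /label big_set1; apply/negbTE.
Qed.

Definition wGGGGGG := mkw nG nG nG nG nG nG.
Definition wGTTTTG := mkw nG nT nT nT nT nG.
Definition wGTGGTG := mkw nG nT nG nG nT nG.
Definition wGGTTGG := mkw nG nG nT nT nG nG.
Definition f_words := [:: wGGGGGG; wGTTTTG; wGTGGTG; wGGTTGG].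

Lemma eq_L (i : leaf) (k : nat) : (k < 6)%N -> (i == L k) = (val i == k).
Proof. by move=> lt_k6; rewrite -val_eqE /= inordK. Qed.

Ltac eval_word_sums :=
  rewrite ?(big_mkcond (fun i => i \in _)) !big_ord_recl !big_ord0 ?inE ?eq_L // !ffunE;
  vm_compute.

Lemma f_word_sum0 (w : word) : w \in f_words -> \sum_i w i == 0.
Proof. by rewrite !inE => /or4P[]/eqP->; eval_word_sums. Qed.

Lemma f_word_letters (w : word) : w \in f_words -> forall i, k2p (w i) = nG.
Proof.
rewrite !inE => /or4P[]/eqP-> i; apply/eqP;
  by case: i => [[|[|[|[|[|[|i]]]]]] lt_i6] //; rewrite ffunE; vm_compute.
Qed.

Lemma f_word_neqA (w : word) (i : leaf) : w \in f_words -> w i != nA.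
Proof. by move=> /f_word_letters/(_ i)/eqP; apply: contraTneq => ->. Qed.

(* Locked: [simpl] would otherwise unfold it when reducing [nth]. *)
HB.lock Definition label_column (e : {set leaf}) : seq grp := [seq label w e | w <- f_words].

Lemma nth_label_column (e : {set leaf}) (j : nat) :
  (j < 4)%N -> (label_column e)`_j = label f_words`_j e.
Proof. by move=> lt_j4; rewrite label_column.unlock (nth_map 0). Qed.

Ltac eval_label_column := apply/eqP; rewrite label_column.unlock /= /label; eval_word_sums.

Lemma label_column_12 : label_column [set L 0; L 1] = [:: nA; nC; nC; nA].
Proof. by eval_label_column. Qed.
Lemma label_column_13 : label_column [set L 0; L 2] = [:: nA; nC; nA; nC].
Proof. by eval_label_column. Qed.
Lemma label_column_123 : label_column [set L 0; L 1; L 2] = [:: nG; nG; nT; nT].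
Proof. by eval_label_column. Qed.
Lemma label_column_1234 : label_column [set L 0; L 1; L 2; L 3] = [:: nA; nC; nC; nA].
Proof. by eval_label_column. Qed.
Lemma label_column_1235 : label_column [set L 0; L 1; L 2; L 4] = [:: nA; nC; nA; nC].
Proof. by eval_label_column. Qed.

Lemma f_words_k2p_equiv (T : seq {set leaf}) (j k : nat) :
  (j < 4)%N -> (k < 4)%N ->
  all (fun e => k2p (label_column e)`_j == k2p (label_column e)`_k) T ->
  k2p_equiv T f_words`_j f_words`_k.
Proof.
move=> lt_j4 lt_k4 /allP jk_T; apply: k2p_equiv_internal => [i|e /jk_T/eqP].
  by rewrite !f_word_letters ?mem_nth.
by rewrite !nth_label_column.
Qed.

Lemma ev_f (R : realType) (x : point R) :
  ev (f R) x = x (Defs.coord wGGGGGG) + x (Defs.coord wGTTTTG)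
               - x (Defs.coord wGTGGTG) - x (Defs.coord wGGTTGG).
Proof. by rewrite /ev /f !mevalB mevalD /q !mevalXU. Qed.

Lemma ev_f_span (R : realType) (y z : point R) (l u : CC R) :
  ev (f R) (fun k => l * y k + u * z k) = l * ev (f R) y + u * ev (f R) z.
Proof. by rewrite !ev_f; ring. Qed.

Lemma mem_f_words :
  [/\ wGGGGGG \in f_words, wGTTTTG \in f_words, wGTGGTG \in f_words & wGGTTGG \in f_words].
Proof. by rewrite !inE !eqxx ?orbT. Qed.

Lemma qmap_f_pairs (R : realType) (T : seq {set leaf}) (a : params R) :
  (forall e, a e nG = a e nT) ->
  k2p_equiv T wGGGGGG wGGTTGG /\ k2p_equiv T wGTTTTG wGTGGTG \/
  k2p_equiv T wGGGGGG wGTGGTG /\ k2p_equiv T wGTTTTG wGGTTGG ->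
  ev (f R) (qmap T a) = 0.
Proof.
move=> aGT pairs; have [f1 f2 f3 f4] := mem_f_words.
have qmap_eq w w' : w \in f_words -> w' \in f_words -> k2p_equiv T w w' ->
    qmap T a (Defs.coord w) = qmap T a (Defs.coord w').
  move=> /f_word_sum0/eqP sum_w /f_word_sum0/eqP sum_w' ww'.
  by apply: qmap_k2p_equiv aGT _ ww'; rewrite sum_w sum_w'.
rewrite ev_f; case: pairs => [[/(qmap_eq _ _ f1 f4)-> /(qmap_eq _ _ f2 f3)->]
                       |[/(qmap_eq _ _ f1 f3)-> /(qmap_eq _ _ f2 f4)->]]; ring.
Qed.

Lemma VT_f_vanishes (R : realType) (m : model) (T : seq {set leaf}) :
  m = JC \/ m = K2P -> T = T1 \/ T = T2 -> ideal_of (@VT R m T) (f R).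
Proof.
move=> Hm HT; apply: ideal_of_zclosure => _ [a [Ha ->]].
apply: qmap_f_pairs (model_constraint_K2P Hm Ha) _.
case: HT => ->; [left|right]; split;
  [ apply: (@f_words_k2p_equiv _ 0 3) | apply: (@f_words_k2p_equiv _ 1 2)
  | apply: (@f_words_k2p_equiv _ 0 2) | apply: (@f_words_k2p_equiv _ 1 3)] => //=;
  by rewrite ?label_column_12 ?label_column_13 label_column_123
             ?label_column_1234 ?label_column_1235.
Qed.

Lemma A_counts (T : seq {set leaf}) : T = T3 \/ T = T4 ->
  [seq count (fun e => (label_column e)`_j == nA) T | j <- iota 0 4] = [:: 2; 0; 1; 1]%N.
Proof.
by case=> ->; rewrite /= ?label_column_12 ?label_column_13 label_column_123
                       ?label_column_1234 ?label_column_1235.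
Qed.

Lemma ev_f_weight_A (R : realType) (T : seq {set leaf}) :
  T = T3 \/ T = T4 -> ev (f R) (qmap T (weight_A R)) = 1.
Proof.
move=> HT; have [f1 f2 f3 f4] := mem_f_words.
have count_column j : (j < 4)%N ->
    count (fun e => label f_words`_j e == nA) T = count (fun e => (label_column e)`_j == nA) T.
  by move=> lt_j4; apply: eq_count => e; rewrite nth_label_column.
rewrite ev_f !qmap_weight_A ?f_word_sum0 //.
rewrite !count_A_internal => [|i|i|i|i]; try by apply: f_word_neqA.
rewrite (count_column 0) // (count_column 1) // (count_column 2) // (count_column 3) //.
by move: (A_counts HT) => /= [-> -> -> ->]; ring.
Qed.

Theorem lemma5 (R : realType) (m : model) :
  m = JC \/ m = K2P ->
  ideal_of (join (@VT R m T1) (@VT R m T2)) (f R) /\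
  (forall T, T = T3 \/ T = T4 ->
     ~ ideal_of (@VT R m T) (f R) /\
     ~ subset_pts (@VT R m T) (join (@VT R m T1) (@VT R m T2))).
Proof.
move=> Hm; have join_f : ideal_of (join (@VT R m T1) (@VT R m T2)) (f R).
  apply: ideal_of_join; first exact: ev_f_span.
  - by apply: VT_f_vanishes Hm _; left.
  - by apply: VT_f_vanishes Hm _; right.
split=> // T HT.
have Vx : VT m T (qmap T (weight_A R)).
  by apply: zclosure_sub; exists (weight_A R); split=> //; apply: weight_A_constraint.
have fx_neq0 : ev (f R) (qmap T (weight_A R)) != 0 by rewrite ev_f_weight_A ?oner_neq0.
split; [exact: nonvanishing_not_ideal Vx fx_neq0 | exact: nonvanishing_not_subset join_f Vx fx_neq0].
Qed.
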